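(* Let $c\in\mathbb{R}$ with $c\neq 1$, and let $f:\mathbb{R}\to\mathbb{R}$ be a twice differentiable function satisfying $(c^2-1)f''(z)+\sin f(z)=0$. Fix $\zeta\in\mathbb{C}\setminus\{0\}$ and define $$A=-\frac{i\left(4(1+c)\zeta^2-(c-1)\cos f(z)\right)}{8\zeta},\quad B=\frac{(c-1)\left(i\sin f(z)+2(c+1)\zeta f'(z)\right)}{8\zeta},\quad \tilde B=\frac{(c-1)\left(i\sin f(z)-2(c+1)\zeta f'(z)\right)}{8\zeta},$$ $$C=-\frac{i\zeta}{2}+\frac{i\cos f(z)}{8\zeta},\quad D=\frac{i\sin f(z)}{8\zeta}+\frac{(c-1)f'(z)}{4},\quad \tilde D=\frac{i\sin f(z)}{8\zeta}-\frac{(c-1)f'(z)}{4}.$$ Let $\chi(z,\tau)=(\chi_1(z,\tau),\chi_2(z,\tau))^T$ be any simultaneous solution of $$\chi_z=\begin{pmatrix} C & D\\ \tilde D & -C\end{pmatrix}\chi,\qquad \chi_\tau=\begin{pmatrix} A & B\\ \tilde B & -A\end{pmatrix}\chi.$$ Then $w(z,\tau)=\chi_1(z,\tau)^2+\chi_2(z,\tau)^2$ satisfies $$(c^2-1)w_{zz}-2c\,w_{z\tau}+w_{\tau\tau}+\cos\left(f(z)\right)w=0.$$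
   Context: This is the Lax pair of the sine-Gordon equation $u_{tt}-u_{xx}+\sin u=0$ written in the traveling frame $z=x-ct$, $\tau=t$ and evaluated at the stationary solution $u=f(z)$; the equation for $w$ is the linearization of the traveling-frame sine-Gordon equation $(c^2-1)v_{zz}-2cv_{z\tau}+v_{\tau\tau}+\sin v=0$ about $v=f(z)$. *)

From Stdlib Require Import Reals.
From Coquelicot Require Import Coquelicot.
Open Scope C_scope.

Definition coefA (c : R) (zeta : C) (fz : R) : C :=
  - (Ci * (RtoC 4 * RtoC (1 + c) * zeta * zeta - RtoC (c - 1) * RtoC (cos fz)))
    / (RtoC 8 * zeta).
Definition coefB (c : R) (zeta : C) (fz dfz : R) : C :=
  RtoC (c - 1) * (Ci * RtoC (sin fz) + RtoC 2 * RtoC (c + 1) * zeta * RtoC dfz)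
    / (RtoC 8 * zeta).
Definition coefBt (c : R) (zeta : C) (fz dfz : R) : C :=
  RtoC (c - 1) * (Ci * RtoC (sin fz) - RtoC 2 * RtoC (c + 1) * zeta * RtoC dfz)
    / (RtoC 8 * zeta).
Definition coefC (zeta : C) (fz : R) : C :=
  - (Ci * zeta) / RtoC 2 + Ci * RtoC (cos fz) / (RtoC 8 * zeta).
Definition coefD (c : R) (zeta : C) (fz dfz : R) : C :=
  Ci * RtoC (sin fz) / (RtoC 8 * zeta) + RtoC (c - 1) * RtoC dfz / RtoC 4.
Definition coefDt (c : R) (zeta : C) (fz dfz : R) : C :=
  Ci * RtoC (sin fz) / (RtoC 8 * zeta) - RtoC (c - 1) * RtoC dfz / RtoC 4.

From Stdlib Require Import Reals Lra.
From Coquelicot Require Import Coquelicot.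
Open Scope C_scope.

(* Along the characteristic directions d- = (c-1) d_z - d_tau and d+ = (c+1) d_z - d_tau the
   Lax pair becomes the light-cone Lax pair of sine-Gordon:
     d- chi = [[i zeta, -(c-1) f'/2], [(c-1) f'/2, -i zeta]] chi,
     d+ chi = -(4 i zeta)^-1 [[cos f, sin f], [sin f, -cos f]] chi,
   so d+ w = -(cos f (chi1^2 - chi2^2) + 2 sin f chi1 chi2) / (2 i zeta), and applying d-
   (with d- f = (c-1) f') gives d- d+ w = -cos f * w; the operator of the theorem is d- d+.
   Concretely, every derivative of w is again a quadratic form in (chi1, chi2) whose
   coefficients are rational in i zeta, cos f, sin f and f', and the identity is checked on
   these coefficients. *)

Lemma is_derive_C_eq (f : R -> C) x (l l' : C) :
  is_derive f x l -> l = l' -> is_derive f x l'.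
Proof. now intros H <-. Qed.

Lemma is_derive_C_ext (f g : R -> C) x (l : C) :
  (forall y, f y = g y) -> is_derive f x l -> is_derive g x l.
Proof. exact (is_derive_ext f g x l). Qed.

Lemma is_derive_Re (f : R -> C) x l :
  is_derive f x l -> is_derive (fun y => Re (f y)) x (Re l).
Proof.
  intros H.
  exact (@filterdiff_comp R_AbsRing (AbsRing_NormedModule R_AbsRing) C_R_NormedModule R_NormedModule
           _ _ f Re _ _ H (filterdiff_linear _ is_linear_fst)).
Qed.

Lemma is_derive_Im (f : R -> C) x l :
  is_derive f x l -> is_derive (fun y => Im (f y)) x (Im l).
Proof.
  intros H.
  exact (@filterdiff_comp R_AbsRing (AbsRing_NormedModule R_AbsRing) C_R_NormedModule R_NormedModule
           _ _ f Im _ _ H (filterdiff_linear _ is_linear_snd)).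
Qed.

Lemma is_derive_C_parts (f : R -> C) x l :
  is_derive (fun y => Re (f y)) x (Re l) -> is_derive (fun y => Im (f y)) x (Im l) ->
  is_derive f x l.
Proof.
  intros Hre Him.
  refine (@filterdiff_ext _ _ C_R_NormedModule _ _ _ f _ _
    (@filterdiff_comp'_2 R_AbsRing _ R_NormedModule R_NormedModule C_R_NormedModule
       (fun y => Re (f y)) (fun y => Im (f y)) (fun a b => (a, b)) x
       _ _ (fun a b => (a, b)) Hre Him
       (filterdiff_linear _ (is_linear_prod _ _ is_linear_fst is_linear_snd)))).
  now intros y; destruct (f y).
Qed.

Lemma is_derive_Cconst (k : C) x : is_derive (fun _ : R => k) x (RtoC 0).
Proof. exact (is_derive_const (K := R_AbsRing) (V := C_R_NormedModule) k x). Qed.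

Lemma is_derive_Cplus (f g : R -> C) x df dg :
  is_derive f x df -> is_derive g x dg -> is_derive (fun y => f y + g y) x (df + dg).
Proof. exact (is_derive_plus f g x df dg). Qed.

Lemma is_derive_Cmult (f g : R -> C) x df dg :
  is_derive f x df -> is_derive g x dg ->
  is_derive (fun y => f y * g y) x (df * g x + f x * dg).
Proof.
  intros Hf Hg.
  pose proof (is_derive_Re _ _ _ Hf) as Hf1. pose proof (is_derive_Im _ _ _ Hf) as Hf2.
  pose proof (is_derive_Re _ _ _ Hg) as Hg1. pose proof (is_derive_Im _ _ _ Hg) as Hg2.
  apply is_derive_C_parts.
  - replace (Re (df * g x + f x * dg))
      with (Re df * Re (g x) + Re (f x) * Re dg - (Im df * Im (g x) + Im (f x) * Im dg))%R
      by (unfold Re, Im; simpl; ring).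
    exact (is_derive_minus _ _ _ _ _
             (Derive.is_derive_mult _ _ _ _ _ Hf1 Hg1) (Derive.is_derive_mult _ _ _ _ _ Hf2 Hg2)).
  - replace (Im (df * g x + f x * dg))
      with (Re df * Im (g x) + Re (f x) * Im dg + (Im df * Re (g x) + Im (f x) * Re dg))%R
      by (unfold Re, Im; simpl; ring).
    exact (is_derive_plus _ _ _ _ _
             (Derive.is_derive_mult _ _ _ _ _ Hf1 Hg2) (Derive.is_derive_mult _ _ _ _ _ Hf2 Hg1)).
Qed.

Lemma is_derive_RtoC (h : R -> R) x d :
  is_derive h x d -> is_derive (fun y => RtoC (h y)) x (RtoC d).
Proof.
  intros H. apply is_derive_C_parts; [exact H |].
  exact (is_derive_const (K := R_AbsRing) (V := R_NormedModule) 0%R x).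
Qed.

Definition quad_form (a b g x1 x2 : C) : C := a * x1 * x1 + b * x1 * x2 + g * x2 * x2.

Lemma is_derive_quad_form (a b g x1 x2 : R -> C) y da db dg p q r :
  is_derive a y da -> is_derive b y db -> is_derive g y dg ->
  is_derive x1 y (p * x1 y + q * x2 y) ->
  is_derive x2 y (r * x1 y - p * x2 y) ->
  is_derive (fun y => quad_form (a y) (b y) (g y) (x1 y) (x2 y)) y
    (quad_form (da + RtoC 2 * p * a y + r * b y)
               (db + RtoC 2 * q * a y + RtoC 2 * r * g y)
               (dg + q * b y - RtoC 2 * p * g y) (x1 y) (x2 y)).
Proof.
  intros Ha Hb Hg H1 H2.
  eapply is_derive_C_eq.
  - exact (is_derive_Cplus _ _ _ _ _
      (is_derive_Cplus _ _ _ _ _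
         (is_derive_Cmult _ _ _ _ _ (is_derive_Cmult _ _ _ _ _ Ha H1) H1)
         (is_derive_Cmult _ _ _ _ _ (is_derive_Cmult _ _ _ _ _ Hb H1) H2))
      (is_derive_Cmult _ _ _ _ _ (is_derive_Cmult _ _ _ _ _ Hg H2) H2)).
  - unfold quad_form. ring.
Qed.

Lemma is_derive_sum_squares (x1 x2 : R -> C) y p q r :
  is_derive x1 y (p * x1 y + q * x2 y) ->
  is_derive x2 y (r * x1 y - p * x2 y) ->
  is_derive (fun y => x1 y * x1 y + x2 y * x2 y) y
    (quad_form (RtoC 2 * p) (RtoC 2 * (q + r)) (- RtoC 2 * p) (x1 y) (x2 y)).
Proof.
  intros H1 H2.
  apply (is_derive_C_ext (fun y => quad_form (RtoC 1) (RtoC 0) (RtoC 1) (x1 y) (x2 y))).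
  { intros u. unfold quad_form. ring. }
  eapply is_derive_C_eq.
  - apply (is_derive_quad_form (fun _ => RtoC 1) (fun _ => RtoC 0) (fun _ => RtoC 1) x1 x2).
    1-3: apply is_derive_Cconst.
    + exact H1.
    + exact H2.
  - unfold quad_form. ring.
Qed.

Lemma Ci_mul_div (x y : C) : y <> RtoC 0 -> Ci * x / y = - x / (Ci * y).
Proof.
  intros Hy. field_simplify_eq; [| split; [exact Hy | exact Ci_nz]].
  replace (Ci ^ 2) with (- RtoC 1) by (apply injective_projections; simpl; ring).
  ring.
Qed.

(* [coefS] is D + Dt, and (B + Bt) / (c - 1). *)
Definition coefS (zeta : C) (fz : R) : C := Ci * RtoC (sin fz) / (RtoC 4 * zeta).
Definition coefC_deriv (zeta : C) (fz dfz : R) : C :=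
  - (Ci * RtoC (sin fz * dfz) / (RtoC 8 * zeta)).
Definition coefS_deriv (zeta : C) (fz dfz : R) : C :=
  Ci * RtoC (cos fz * dfz) / (RtoC 4 * zeta).

Section LaxPair.

Variables (c : R) (zeta : C) (f : R -> R) (chi1 chi2 : R -> R -> C).
Hypothesis hzeta : zeta <> RtoC 0.

Lemma coefA_coefC fz : coefA c zeta fz = RtoC (c - 1) * coefC zeta fz - Ci * zeta.
Proof. unfold coefA, coefC. rewrite !RtoC_minus, RtoC_plus. field. exact hzeta. Qed.

Lemma coefD_coefS fz dfz :
  coefD c zeta fz dfz = coefS zeta fz / RtoC 2 + RtoC (c - 1) * RtoC dfz / RtoC 4.
Proof. unfold coefD, coefS. field. exact hzeta. Qed.

Lemma coefDt_coefS fz dfz :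
  coefDt c zeta fz dfz = coefS zeta fz / RtoC 2 - RtoC (c - 1) * RtoC dfz / RtoC 4.
Proof. unfold coefDt, coefS. field. exact hzeta. Qed.

Lemma coefB_coefS fz dfz :
  coefB c zeta fz dfz = RtoC (c - 1) * (coefS zeta fz / RtoC 2 + RtoC (c + 1) * RtoC dfz / RtoC 4).
Proof. unfold coefB, coefS. field. exact hzeta. Qed.

Lemma coefBt_coefS fz dfz :
  coefBt c zeta fz dfz = RtoC (c - 1) * (coefS zeta fz / RtoC 2 - RtoC (c + 1) * RtoC dfz / RtoC 4).
Proof. unfold coefBt, coefS. field. exact hzeta. Qed.

Lemma is_derive_coefC z df :
  is_derive f z df -> is_derive (fun y => coefC zeta (f y)) z (coefC_deriv zeta (f z) df).
Proof.
  intros Hf.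
  assert (Hcos : is_derive (fun y => RtoC (cos (f y))) z (RtoC (- sin (f z) * df))).
  { apply is_derive_RtoC.
    replace (- sin (f z) * df)%R with (df * - sin (f z))%R by ring.
    exact (is_derive_comp cos f z _ _ (is_derive_cos (f z)) Hf). }
  unfold coefC, Cdiv. eapply is_derive_C_eq.
  - apply is_derive_Cplus; [apply is_derive_Cconst |].
    apply is_derive_Cmult; [| apply is_derive_Cconst].
    apply is_derive_Cmult; [apply is_derive_Cconst | exact Hcos].
  - unfold coefC_deriv. rewrite !RtoC_mult, RtoC_opp. field. exact hzeta.
Qed.

Lemma is_derive_coefS z df :
  is_derive f z df -> is_derive (fun y => coefS zeta (f y)) z (coefS_deriv zeta (f z) df).
Proof.
  intros Hf.
  assert (Hsin : is_derive (fun y => RtoC (sin (f y))) z (RtoC (cos (f z) * df))).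
  { apply is_derive_RtoC.
    replace (cos (f z) * df)%R with (df * cos (f z))%R by ring.
    exact (is_derive_comp sin f z _ _ (is_derive_sin (f z)) Hf). }
  unfold coefS, Cdiv. eapply is_derive_C_eq.
  - apply is_derive_Cmult; [| apply is_derive_Cconst].
    apply is_derive_Cmult; [apply is_derive_Cconst | exact Hsin].
  - unfold coefS_deriv. field. exact hzeta.
Qed.

Hypothesis hf : forall z, ex_derive f z.
Hypothesis hz1 : forall z t : R, is_derive (fun z' => chi1 z' t) z
  (coefC zeta (f z) * chi1 z t + coefD c zeta (f z) (Derive f z) * chi2 z t).
Hypothesis hz2 : forall z t : R, is_derive (fun z' => chi2 z' t) z
  (coefDt c zeta (f z) (Derive f z) * chi1 z t - coefC zeta (f z) * chi2 z t).
Hypothesis ht1 : forall z t : R, is_derive (fun t' => chi1 z t') t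
  (coefA c zeta (f z) * chi1 z t + coefB c zeta (f z) (Derive f z) * chi2 z t).
Hypothesis ht2 : forall z t : R, is_derive (fun t' => chi2 z t') t
  (coefBt c zeta (f z) (Derive f z) * chi1 z t - coefA c zeta (f z) * chi2 z t).

Definition w z t : C := chi1 z t * chi1 z t + chi2 z t * chi2 z t.

Definition w_z z t : C :=
  let C0 := coefC zeta (f z) in let S := coefS zeta (f z) in
  quad_form (RtoC 2 * C0) (RtoC 2 * S) (- RtoC 2 * C0) (chi1 z t) (chi2 z t).

Definition w_t z t : C :=
  let A := coefA c zeta (f z) in let S := coefS zeta (f z) in
  quad_form (RtoC 2 * A) (RtoC 2 * RtoC (c - 1) * S) (- RtoC 2 * A) (chi1 z t) (chi2 z t).

Definition w_zz z t : C :=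
  let C0 := coefC zeta (f z) in let S := coefS zeta (f z) in
  let D := coefD c zeta (f z) (Derive f z) in let Dt := coefDt c zeta (f z) (Derive f z) in
  let dC := coefC_deriv zeta (f z) (Derive f z) in let dS := coefS_deriv zeta (f z) (Derive f z) in
  quad_form (RtoC 2 * dC + RtoC 4 * C0 * C0 + RtoC 2 * Dt * S)
            (RtoC 2 * dS + RtoC 4 * (D - Dt) * C0)
            (- RtoC 2 * dC + RtoC 4 * C0 * C0 + RtoC 2 * D * S) (chi1 z t) (chi2 z t).

Definition w_zt z t : C :=
  let A := coefA c zeta (f z) in let C0 := coefC zeta (f z) in let S := coefS zeta (f z) in
  let B := coefB c zeta (f z) (Derive f z) in let Bt := coefBt c zeta (f z) (Derive f z) in
  quad_form (RtoC 4 * A * C0 + RtoC 2 * Bt * S)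
            (RtoC 4 * (B - Bt) * C0)
            (RtoC 4 * A * C0 + RtoC 2 * B * S) (chi1 z t) (chi2 z t).

Definition w_tt z t : C :=
  let A := coefA c zeta (f z) in let S := coefS zeta (f z) in
  let B := coefB c zeta (f z) (Derive f z) in let Bt := coefBt c zeta (f z) (Derive f z) in
  quad_form (RtoC 4 * A * A + RtoC 2 * RtoC (c - 1) * Bt * S)
            (RtoC 4 * (B - Bt) * A)
            (RtoC 4 * A * A + RtoC 2 * RtoC (c - 1) * B * S) (chi1 z t) (chi2 z t).

Lemma w_linearized_sine_gordon z t :
  RtoC (c ^ 2 - 1) * w_zz z t - RtoC 2 * RtoC c * w_zt z t + w_tt z t
  + RtoC (cos (f z)) * w z t = RtoC 0.
Proof.
  unfold w_zz, w_zt, w_tt, w, quad_form.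
  rewrite coefA_coefC, coefB_coefS, coefBt_coefS, coefD_coefS, coefDt_coefS.
  unfold coefC, coefS, coefC_deriv, coefS_deriv.
  (* Afterwards i occurs only through i zeta, and the identity is rational in i zeta. *)
  rewrite !Ci_mul_div by (apply Cmult_neq_0; [intros E; injection E; lra | exact hzeta]).
  rewrite !RtoC_mult, !RtoC_minus, !RtoC_plus, !RtoC_pow.
  field. exact (conj hzeta Ci_nz).
Qed.

Lemma is_derive_w_z z t : is_derive (fun z' => w z' t) z (w_z z t).
Proof.
  eapply is_derive_C_eq.
  - exact (is_derive_sum_squares (fun z' => chi1 z' t) (fun z' => chi2 z' t) z _ _ _
             (hz1 z t) (hz2 z t)).
  - unfold w_z, quad_form. rewrite coefD_coefS, coefDt_coefS. field.
Qed.

Lemma is_derive_w_t z t : is_derive (fun t' => w z t') t (w_t z t).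
Proof.
  eapply is_derive_C_eq.
  - exact (is_derive_sum_squares (fun t' => chi1 z t') (fun t' => chi2 z t') t _ _ _
             (ht1 z t) (ht2 z t)).
  - unfold w_t, quad_form. rewrite coefB_coefS, coefBt_coefS. field.
Qed.

Lemma is_derive_w_z_z z t : is_derive (fun z' => w_z z' t) z (w_zz z t).
Proof.
  pose proof (is_derive_coefC z _ (Derive_correct _ _ (hf z))) as HC.
  pose proof (is_derive_coefS z _ (Derive_correct _ _ (hf z))) as HS.
  eapply is_derive_C_eq.
  - apply (is_derive_quad_form (fun y => RtoC 2 * coefC zeta (f y))
             (fun y => RtoC 2 * coefS zeta (f y)) (fun y => - RtoC 2 * coefC zeta (f y))
             (fun z' => chi1 z' t) (fun z' => chi2 z' t)).
    + exact (is_derive_Cmult _ _ _ _ _ (is_derive_Cconst _ _) HC).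
    + exact (is_derive_Cmult _ _ _ _ _ (is_derive_Cconst _ _) HS).
    + exact (is_derive_Cmult _ _ _ _ _ (is_derive_Cconst _ _) HC).
    + apply hz1.
    + apply hz2.
  - unfold w_zz, quad_form. ring.
Qed.

Lemma is_derive_w_z_t z t : is_derive (fun t' => w_z z t') t (w_zt z t).
Proof.
  eapply is_derive_C_eq.
  - apply (is_derive_quad_form (fun _ => RtoC 2 * coefC zeta (f z))
             (fun _ => RtoC 2 * coefS zeta (f z)) (fun _ => - RtoC 2 * coefC zeta (f z))
             (fun t' => chi1 z t') (fun t' => chi2 z t')).
    1-3: apply is_derive_Cconst.
    + apply ht1.
    + apply ht2.
  - unfold w_zt, quad_form. ring.
Qed.

Lemma is_derive_w_t_t z t : is_derive (fun t' => w_t z t') t (w_tt z t).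
Proof.
  eapply is_derive_C_eq.
  - apply (is_derive_quad_form (fun _ => RtoC 2 * coefA c zeta (f z))
             (fun _ => RtoC 2 * RtoC (c - 1) * coefS zeta (f z))
             (fun _ => - RtoC 2 * coefA c zeta (f z)) (fun t' => chi1 z t') (fun t' => chi2 z t')).
    1-3: apply is_derive_Cconst.
    + apply ht1.
    + apply ht2.
  - unfold w_tt, quad_form. ring.
Qed.

End LaxPair.

Theorem theorem1
  (c : R) (hc : c <> 1%R) (f : R -> R)
  (hf1 : forall z : R, ex_derive f z)
  (hf2 : forall z : R, ex_derive (Derive f) z)
  (hode : forall z : R, ((c ^ 2 - 1) * Derive (Derive f) z + sin (f z))%R = 0%R)
  (zeta : C) (hzeta : zeta <> RtoC 0)
  (chi1 chi2 : R -> R -> C)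
  (hz1 : forall z t : R, is_derive (fun z' => chi1 z' t) z
     (coefC zeta (f z) * chi1 z t + coefD c zeta (f z) (Derive f z) * chi2 z t))
  (hz2 : forall z t : R, is_derive (fun z' => chi2 z' t) z
     (coefDt c zeta (f z) (Derive f z) * chi1 z t - coefC zeta (f z) * chi2 z t))
  (ht1 : forall z t : R, is_derive (fun t' => chi1 z t') t
     (coefA c zeta (f z) * chi1 z t + coefB c zeta (f z) (Derive f z) * chi2 z t))
  (ht2 : forall z t : R, is_derive (fun t' => chi2 z t') t
     (coefBt c zeta (f z) (Derive f z) * chi1 z t - coefA c zeta (f z) * chi2 z t)) :
  let w := fun z t : R => chi1 z t * chi1 z t + chi2 z t * chi2 z t in
  exists wz wt : R -> R -> C,
    (forall z t : R, is_derive (fun z' => w z' t) z (wz z t)) /\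
    (forall z t : R, is_derive (fun t' => w z t') t (wt z t)) /\
    (forall z t : R, exists wzz wzt wtt : C,
       is_derive (fun z' => wz z' t) z wzz /\
       is_derive (fun t' => wz z t') t wzt /\
       is_derive (fun t' => wt z t') t wtt /\
       RtoC (c ^ 2 - 1) * wzz - RtoC 2 * RtoC c * wzt + wtt + RtoC (cos (f z)) * w z t
         = RtoC 0).
Proof.
  intros w.
  exists (w_z zeta f chi1 chi2), (w_t c zeta f chi1 chi2).
  split; [| split].
  - exact (is_derive_w_z c zeta f chi1 chi2 hzeta hz1 hz2).
  - exact (is_derive_w_t c zeta f chi1 chi2 hzeta ht1 ht2).
  - intros z t.
    exists (w_zz c zeta f chi1 chi2 z t), (w_zt c zeta f chi1 chi2 z t),
      (w_tt c zeta f chi1 chi2 z t).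
    split; [| split; [| split]].
    + exact (is_derive_w_z_z c zeta f chi1 chi2 hzeta hf1 hz1 hz2 z t).
    + exact (is_derive_w_z_t c zeta f chi1 chi2 ht1 ht2 z t).
    + exact (is_derive_w_t_t c zeta f chi1 chi2 ht1 ht2 z t).
    + exact (w_linearized_sine_gordon c zeta f chi1 chi2 hzeta z t).
Qed.
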